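(* Let $G$ be a finite simple graph with at least $66$ vertices and $G\in\mathcal{F}_3$. Then $crx_3(G)>4$; that is, no edge-colouring of $G$ with at most $4$ colours has the property that any three vertices of $G$ lie on a common rainbow cycle.
   Context: An edge-coloured cycle is rainbow if all its edges have distinct colours. For $k\ge 1$, $\mathcal{F}_k$ is the family of graphs in which any $k$ vertices lie on a common cycle. For $G\in\mathcal{F}_k$, a $k$-rainbow cycle colouring of $G$ is an edge-colouring such that any $k$ vertices of $G$ lie on a common rainbow cycle; $crx_k(G)$ is the minimum number of colours in a $k$-rainbow cycle colouring of $G$. *)

From mathcomp Require Import all_boot.
Set Implicit Arguments. Unset Strict Implicit. Unset Printing Implicit Defensive.

Definition simple_graph (T : finType) (e : rel T) : Prop :=
  irreflexive e /\ symmetric e.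

Definition graph_cycle (T : finType) (e : rel T) (c : seq T) : bool :=
  [&& 2 < size c, uniq c & cycle e c].

Definition cycle_edges (T : finType) (c : seq T) : seq (T * T) := zip c (rot 1 c).

(* An edge-colouring with colours in 'I_n: a colour for every edge, independent
   of the orientation of the edge (values on non-edges are irrelevant). *)
Definition edge_colouring (T : finType) (e : rel T) (n : nat) (col : T -> T -> 'I_n) : Prop :=
  forall x y, e x y -> col x y = col y x.

Definition rainbow (T : finType) (n : nat) (col : T -> T -> 'I_n) (c : seq T) : bool :=
  uniq [seq col p.1 p.2 | p <- cycle_edges c].

Definition in_F (T : finType) (e : rel T) (k : nat) : Prop :=
  forall S : {set T}, #|S| = k -> exists c, graph_cycle e c /\ {subset S <= c}.

Definition rainbow_cycle_colouring (T : finType) (e : rel T) (k n : nat)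
    (col : T -> T -> 'I_n) : Prop :=
  edge_colouring e col /\
  forall S : {set T}, #|S| = k ->
    exists c, [/\ graph_cycle e c, rainbow col c & {subset S <= c}].

From mathcomp Require Import all_boot zify.
Set Implicit Arguments. Unset Strict Implicit. Unset Printing Implicit Defensive.

(** Colour every non-edge of G with a fixed colour: this turns a 4-edge-colouring
    into a 4-colouring of the complete graph on at least 66 = R_4(3) vertices, which
    has a monochromatic triangle x, y, z.  A rainbow cycle uses at most 4 colours,
    so it has length at most 4, and any three of its vertices span at least two of
    its edges; if the cycle passes through x, y and z, two of its edges are edges
    of that triangle and get the same colour. *)

Lemma pigeonhole_fibre (C T : finType) (f : T -> C) (K : {set C}) (A : {set T}) m :
  {in A, forall y, f y \in K} -> #|K| * m < #|A| ->
  exists2 i, i \in K & m < #|[set y in A | f y == i]|.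
Proof.
move=> fAK ltKA; apply/exists_inP; apply: contraLR ltKA => /exists_inPn small.
rewrite -leqNgt -sum1_card (partition_big f (mem K)) //= -sum_nat_const.
apply: leq_sum => i Ki; rewrite sum1dep_card.
have := small i Ki; rewrite -leqNgt; apply: leq_trans.
by apply/subset_leq_card/subsetP => y; rewrite !inE.
Qed.

(* The classical bound R_k(3) <= k (R_(k-1)(3) - 1) + 2; it gives 66 for k = 4. *)
Fixpoint ramsey_bound k := if k is k'.+1 then k * (ramsey_bound k').-1 + 2 else 2.

Lemma ramsey_bound_gt0 k : 0 < ramsey_bound k.
Proof. by case: k => //= k; rewrite addn2. Qed.

Lemma monochromatic_triangle (C T : finType) (c : T -> T -> C) k :
  forall (K : {set C}) (A : {set T}), #|K| = k ->
  {in A &, forall x y, x != y -> c x y \in K} -> ramsey_bound k <= #|A| ->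
  exists x y z, [/\ [&& x \in A, y \in A & z \in A], [&& x != y, x != z & y != z],
                    c x z = c x y & c y z = c x y].
Proof.
elim: k => [|k IHk] K A cardK cAK bigA.
  have /card_gt1P [x [y [Ax Ay xy]]] : 1 < #|A| by [].
  by move/eqP: cardK (cAK x y Ax Ay xy); rewrite cards_eq0 => /eqP ->; rewrite inE.
have [a Aa] : exists a, a \in A.
  by apply/card_gt0P; apply: leq_trans bigA; rewrite /= addn2.
pose B i := [set y in A :\ a | c a y == i].
have [i Ki bigBi] : exists2 i, i \in K & (ramsey_bound k).-1 < #|B i|.
  apply: pigeonhole_fibre => [y|]; first by rewrite !inE => /andP[ya Ay]; rewrite cAK // eq_sym.
  by rewrite cardK (cardsD1 a A) Aa /= in bigA *; lia.
have BiA y : y \in B i -> [&& y \in A, y != a & c a y == i].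
  by rewrite !inE andbCA andbA.
case: (boolP [exists y in B i, exists z in B i, (y != z) && (c y z == i)]).
  case/exists_inP => y Biy /exists_inP[z Biz /andP[yz /eqP cyz]].
  move: (BiA y Biy) (BiA z Biz) => /and3P[Ay ya /eqP cay] /and3P[Az za /eqP caz].
  by exists a, y, z; rewrite Aa Ay Az yz !(eq_sym a) ya za cay caz cyz.
move/exists_inPn => no_i_edge.
have cBK : {in B i &, forall y z, y != z -> c y z \in K :\ i}.
  move=> y z Biy Biz yz; have /exists_inPn/(_ z Biz) := no_i_edge y Biy.
  move: (BiA y Biy) (BiA z Biz) => /and3P[Ay _ _] /and3P[Az _ _].
  by rewrite yz !inE cAK // andbT.
have cardKi : #|K :\ i| = k by rewrite (cardsD1 i K) Ki in cardK; case: cardK.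
have {}bigBi : ramsey_bound k <= #|B i| by rewrite -(prednK (ramsey_bound_gt0 k)).
have [x [y [z [/and3P[Bix Biy Biz] distinct cxz cyz]]]] := IHk _ _ cardKi cBK bigBi.
exists x, y, z; split=> //.
by move: (BiA x Bix) (BiA y Biy) (BiA z Biz) => /and3P[-> _ _] /and3P[-> _ _] /and3P[-> _ _].
Qed.

Lemma all_cycle_edges (T : finType) (e : rel T) (c : seq T) :
  cycle e c -> all (fun p => e p.1 p.2) (cycle_edges c).
Proof.
case: c => [|a s] //; rewrite /cycle_edges rot1_cons /=.
suff path_zip x : path e x (rcons s a) -> all (fun p => e p.1 p.2) (zip (x :: s) (rcons s a)).
  exact: path_zip.
elim: s x => [|y s IHs] x /=; first by rewrite andbT.
by case/andP => -> /IHs.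
Qed.

Lemma rainbow_size_le (T : finType) n (col : T -> T -> 'I_n) (c : seq T) :
  rainbow col c -> size c <= n.
Proof.
move/card_uniqP; rewrite size_map /cycle_edges size_zip size_rot minnn => <-.
by apply: leq_trans (max_card _) _; rewrite card_ord.
Qed.

Lemma short_cycle_monochromatic_edges (T : finType) (C : eqType)
    (f : T -> T -> C) (c : seq T) x y z i :
  (forall u v, f u v = f v u) -> size c <= 4 ->
  x \in c -> y \in c -> z \in c -> [&& x != y, x != z & y != z] ->
  f x y = i -> f x z = i -> f y z = i ->
  1 < count_mem i [seq f p.1 p.2 | p <- cycle_edges c].
Proof.
move=> fC size_c cx cy cz distinct fxy fxz fyz.
have [fyx fzx fzy] : [/\ f y x = i, f z x = i & f z y = i] by split; rewrite fC.
move: cx cy cz distinct fxy fxz fyz fyx fzx fzy.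
case: c size_c => [|a [|b [|d [|g [|h s]]]]] //= _; rewrite /cycle_edges /= !inE;
  do 3 (do ?case/orP; move/eqP->); rewrite ?eqxx ?andbF //= => _ E1 E2 E3 E4 E5 E6;
  rewrite ?E1 ?E2 ?E3 ?E4 ?E5 ?E6 eqxx; lia.
Qed.

Definition total_colouring (T : finType) (e : rel T) n (col : T -> T -> 'I_n) (c0 : 'I_n)
    (u v : T) : 'I_n :=
  if e u v then col u v else c0.

Lemma total_colouringC (T : finType) (e : rel T) n (col : T -> T -> 'I_n) c0 :
  symmetric e -> edge_colouring e col ->
  forall u v, total_colouring e col c0 u v = total_colouring e col c0 v u.
Proof. by move=> eC colC u v; rewrite /total_colouring eC; case: ifP => // /colC. Qed.

Theorem theorem7 (T : finType) (e : rel T) :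
  simple_graph e -> 66 <= #|T| -> in_F e 3 ->
  ~ exists col : T -> T -> 'I_4, rainbow_cycle_colouring e 3 col.
Proof.
move=> [_ eC] bigT _ [col [colC rainbowS]].
set f := total_colouring e col ord0.
have fC := total_colouringC ord0 eC colC.
have [x [y [z [_ distinct fxz fyz]]]] :
    exists x y z, [/\ [&& x \in setT, y \in setT & z \in setT], [&& x != y, x != z & y != z],
                    f x z = f x y & f y z = f x y].
  by apply: (monochromatic_triangle (K := setT)); rewrite ?cardsT ?card_ord.
have cardS : #|[set x; y; z]| = 3.
  by case/and3P: distinct => xy xz yz; rewrite -setUA cardsU1 cards2 yz !inE negb_or xy xz.
have [c [/and3P[_ _ cyc] rbow Sc]] := rainbowS _ cardS.
have fcol : [seq f p.1 p.2 | p <- cycle_edges c] = [seq col p.1 p.2 | p <- cycle_edges c].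
  by apply/eq_in_map => p /(allP (all_cycle_edges cyc)); rewrite /f /total_colouring => ->.
have [cx cy cz] : [/\ x \in c, y \in c & z \in c] by split; apply: Sc; rewrite !inE eqxx ?orbT.
have := short_cycle_monochromatic_edges fC (rainbow_size_le rbow) cx cy cz distinct erefl fxz fyz.
by rewrite fcol count_uniq_mem // ltnNge leq_b1.
Qed.
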